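(* Let $V$ be a filled sparsity pattern, $X\in\mathbb S^n_V$ positive definite and $Y\in\mathbb S^n_V$. Let $X+tY=L(t)D(t)L(t)^T$ ($L(t)$ unit lower triangular, $D(t)$ positive diagonal) for $t$ near $0$, $L=L(0)$, $D=D(0)$, and $L',D'$ the derivatives at $t=0$. Let $S=\mathcal P(X^{-1})$ and $T=\mathcal P(X^{-1}YX^{-1})$ (so $T=-\frac{d}{dt}\mathcal P((X+tY)^{-1})|_{t=0}$). Then for every $j$, $$\begin{bmatrix}1&L_{I_j j}^T\\0&I\end{bmatrix}\begin{bmatrix}T_{jj}&T_{I_j j}^T\\ T_{I_j j}&T_{I_jI_j}\end{bmatrix}\begin{bmatrix}1&0\\ L_{I_j j}&I\end{bmatrix}=\begin{bmatrix}D'_{jj}/D_{jj}^2&(S_{I_jI_j}L'_{I_j j})^T\\ S_{I_jI_j}L'_{I_j j}&T_{I_jI_j}\end{bmatrix}.$$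
   Context: A symmetric sparsity pattern $V$ is a set of pairs $(i,j)$ with $1\le j\le i\le n$ containing all $(i,i)$; it is filled (chordal) if $i>j>k$, $(i,k)\in V$, $(j,k)\in V$ imply $(i,j)\in V$. $\mathbb S^n_V$ is the set of real symmetric $n\times n$ matrices with $X_{ij}=X_{ji}=0$ whenever $i\ge j$ and $(i,j)\notin V$. $\mathcal P$ is the projection onto $\mathbb S^n_V$: $\mathcal P(A)_{ij}=A_{ij}$ if $(\max(i,j),\min(i,j))\in V$ and $0$ otherwise. For each $j$, $I_j=\{i>j:(i,j)\in V\}$ (sorted increasingly). $A_{IJ}$ is the submatrix with rows $I$ and columns $J$; $A_{Ij}$ the part of column $j$ with rows in $I$. *)

From HB Require Import structures.
From mathcomp Require Export all_boot all_order all_algebra.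
Set Implicit Arguments. Unset Strict Implicit. Unset Printing Implicit Defensive.
Export Order.TTheory GRing.Theory Num.Theory.
Local Open Scope ring_scope.


Definition sparsity_pattern (n : nat) (V : {set 'I_n * 'I_n}) : Prop :=
  (forall p, p \in V -> (p.2 <= p.1)%N) /\ (forall i : 'I_n, (i, i) \in V).

Definition filled (n : nat) (V : {set 'I_n * 'I_n}) : Prop :=
  forall i j k : 'I_n, (j < i)%N -> (k < j)%N ->
    (i, k) \in V -> (j, k) \in V -> (i, j) \in V.

Definition inpat (n : nat) (V : {set 'I_n * 'I_n}) (i j : 'I_n) : bool :=
  if (j <= i)%N then (i, j) \in V else (j, i) \in V.

Definition in_SV (R : nzRingType) (n : nat) (V : {set 'I_n * 'I_n}) (X : 'M[R]_n) : Prop :=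
  X^T = X /\ (forall i j : 'I_n, ~~ inpat V i j -> X i j = 0).

Definition projV (R : nzRingType) (n : nat) (V : {set 'I_n * 'I_n}) (A : 'M[R]_n) : 'M[R]_n :=
  \matrix_(i, j) (if inpat V i j then A i j else 0).

Definition posdef (R : realFieldType) (n : nat) (X : 'M[R]_n) : Prop :=
  X^T = X /\ (forall v : 'cV[R]_n, v != 0 -> 0 < (v^T *m X *m v) 0 0).

Definition unit_lower (R : nzRingType) (n : nat) (L : 'M[R]_n) : Prop :=
  (forall i j : 'I_n, (i < j)%N -> L i j = 0) /\ (forall i : 'I_n, L i i = 1).

Definition pos_diag (R : realFieldType) (n : nat) (D : 'M[R]_n) : Prop :=
  (forall i j : 'I_n, i != j -> D i j = 0) /\ (forall i : 'I_n, 0 < D i i).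

Definition has_deriv0 (R : realFieldType) (f : R -> R) (d : R) : Prop :=
  forall e : R, 0 < e -> exists2 del : R, 0 < del &
    forall t : R, 0 < `|t| < del -> `|(f t - f 0) / t - d| < e.

Definition mx_deriv0 (R : realFieldType) (m p : nat) (F : R -> 'M[R]_(m, p))
  (F' : 'M[R]_(m, p)) : Prop :=
  forall i j, has_deriv0 (fun t => F t i j) (F' i j).

Definition Iset (n : nat) (V : {set 'I_n * 'I_n}) (j : 'I_n) : {set 'I_n} :=
  [set i : 'I_n | (j < i)%N && ((i, j) \in V)].

Definition Iidx (n : nat) (V : {set 'I_n * 'I_n}) (j : 'I_n)
  (a : 'I_#|Iset V j|) : 'I_n := enum_val a.
Arguments Iidx {n} V j a.

Definition subII (R : Type) (n : nat) (V : {set 'I_n * 'I_n}) (j : 'I_n) (A : 'M[R]_n)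
  : 'M[R]_#|Iset V j| := mxsub (Iidx V j) (Iidx V j) A.
Definition subIj (R : Type) (n : nat) (V : {set 'I_n * 'I_n}) (j : 'I_n) (A : 'M[R]_n)
  : 'M[R]_(#|Iset V j|, 1) := mxsub (Iidx V j) (fun _ : 'I_1 => j) A.
Arguments subII {R n} V j A.
Arguments subIj {R n} V j A.
Arguments projV {R n} V A.
Arguments in_SV {R n} V X.
Arguments inpat {n} V i j.

(* Let X + tY = L(t) D(t) L(t)^T, M = X^-1 and N = M Y M.  Differentiating
   the factorization gives Y = (L'D + LD')L^T + LDL'^T.  Writing W = ML (an
   upper triangular matrix with L^T W = D^-1), one finds
     N L = M L' + W D' (L^T W) + W D L'^T W,
   whose last two terms are upper triangular, hence
     (a) (N L)_ij = (M L')_ij for i > j, and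
     (b) (L^T N L)_jj = D'_jj / D_jj^2.
   On a filled pattern V the factors have no fill-in, so column j of L and
   of L' is supported on {j} u I_j, and P(.) does not change the entries of
   N and M indexed by {j} u I_j.  Expanding the block congruence with these
   support facts turns (a) and (b) into the two nontrivial blocks of the
   stated identity. *)
From HB Require Import structures.
From mathcomp Require Import all_boot all_order all_algebra.
From mathcomp Require Import ring lra zify.
Import Order.TTheory GRing.Theory Num.Theory.
Set Implicit Arguments. Unset Strict Implicit. Unset Printing Implicit Defensive.
Local Open Scope ring_scope.

Section Limits.
Variable R : realFieldType.
Implicit Types (h f g : R -> R) (a b c l : R).

(* h t tends to l as t tends to 0 with t <> 0; has_deriv0 f d is
   definitionally lim0 (fun t => (f t - f 0) / t) d. *)
Definition lim0 h l := forall e : R, 0 < e -> exists2 del : R, 0 < del &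
    forall t : R, 0 < `|t| < del -> `|h t - l| < e.

Lemma lim0_cst c : lim0 (fun _ => c) c.
Proof. by move=> e e0; exists 1 => // t _; rewrite subrr normr0. Qed.

Lemma lim0_id : lim0 id 0.
Proof. by move=> e e0; exists e => // t /andP[_]; rewrite subr0. Qed.

Lemma lim0_both h1 h2 l1 l2 e : lim0 h1 l1 -> lim0 h2 l2 -> 0 < e ->
  exists2 del : R, 0 < del & forall t : R, 0 < `|t| < del ->
     `|h1 t - l1| < e /\ `|h2 t - l2| < e.
Proof.
move=> H1 H2 e0; case: (H1 e e0) => d1 d10 P1; case: (H2 e e0) => d2 d20 P2.
exists (Num.min d1 d2); first by rewrite lt_min d10.
move=> t /andP[t0]; rewrite lt_min => /andP[td1 td2].
by split; [apply: P1 | apply: P2]; rewrite t0.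
Qed.

Lemma lim0_ext h1 h2 l r : 0 < r -> (forall t, 0 < `|t| < r -> h1 t = h2 t) ->
  lim0 h1 l -> lim0 h2 l.
Proof.
move=> r0 E H e e0; case: (H e e0) => d d0 P.
exists (Num.min d r); first by rewrite lt_min d0.
move=> t /andP[t0]; rewrite lt_min => /andP[td tr].
by rewrite -E ?t0 ?tr //; apply: P; rewrite t0.
Qed.

Lemma lim0_add h1 h2 l1 l2 : lim0 h1 l1 -> lim0 h2 l2 ->
  lim0 (fun t => h1 t + h2 t) (l1 + l2).
Proof.
move=> H1 H2 e e0; have e20 : 0 < e / 2 by rewrite divr_gt0.
case: (lim0_both H1 H2 e20) => del del0 P; exists del => // t /P [A B].
rewrite (_ : _ - _ = (h1 t - l1) + (h2 t - l2)); last by ring.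
apply: (le_lt_trans (ler_normD _ _)).
by rewrite [e]splitr; apply: ltrD.
Qed.

Lemma lim0_mul h1 h2 l1 l2 : lim0 h1 l1 -> lim0 h2 l2 ->
  lim0 (fun t => h1 t * h2 t) (l1 * l2).
Proof.
move=> H1 H2 e e0.
set K := `|l1| + `|l2| + 1.
have K0 : 0 < K by rewrite /K ltr_wpDl // addr_ge0.
have eK0 : 0 < e + K by rewrite addr_gt0.
set d := e / (e + K).
have d0 : 0 < d by rewrite divr_gt0.
have dE : d * (e + K) = e by rewrite /d mulfVK // gt_eqF.
case: (lim0_both H1 H2 d0) => del del0 P; exists del => // t /P [A B].
rewrite (_ : _ - _ = (h1 t - l1) * (h2 t - l2) + (h1 t - l1) * l2
                     + l1 * (h2 t - l2)); last by ring.
set x := h1 t - l1 in A *; set y := h2 t - l2 in B *.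
apply: (le_lt_trans (ler_normD _ _)).
apply: (@le_lt_trans _ _ (`|x| * `|y| + `|x| * `|l2| + `|l1| * `|y|)).
  by rewrite -!normrM; apply: lerD => //; apply: ler_normD.
have := normr_ge0 x; have := normr_ge0 y.
have := normr_ge0 l1; have := normr_ge0 l2.
rewrite /K in dE K0 *; move: A B dE.
set X1 := `|x|; set Y1 := `|y|; set a1 := `|l1|; set a2 := `|l2|.
by move=> *; nra.
Qed.

Lemma lim0_unique h l1 l2 : lim0 h l1 -> lim0 h l2 -> l1 = l2.
Proof.
move=> H1 H2; apply/eqP; rewrite -subr_eq0 -normr_le0.
apply/ler_addgt0Pr => e e0; rewrite add0r; have e20 : 0 < e / 2 by rewrite divr_gt0.
case: (lim0_both H1 H2 e20) => del del0 P.
have t0 : 0 < `|del / 2| < del.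
  have h0 : 0 < del / 2 by rewrite divr_gt0.
  by rewrite gtr0_norm // h0 /= ltr_pdivrMr // ltr_pMr // ltr1n.
case: (P _ t0) => A B.
rewrite (_ : l1 - l2 = (h (del/2) - l2) - (h (del/2) - l1)); last by ring.
apply: (le_trans (ler_normB _ _)); rewrite [e]splitr addrC.
by apply/ltW/ltrD.
Qed.


Lemma deriv_ext f g d : (forall t, f t = g t) -> has_deriv0 f d -> has_deriv0 g d.
Proof. by move=> E; apply: (@lim0_ext _ _ _ 1) => // t _; rewrite !E. Qed.

Lemma deriv_lin c d : has_deriv0 (fun t => c + t * d) d.
Proof.
apply: (@lim0_ext (fun _ => d) _ _ 1) => //; last exact: lim0_cst.
move=> t /andP[t0 _]; rewrite mul0r addr0 addrC addKr mulrC mulKf //.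
by rewrite -normr_gt0.
Qed.

Lemma deriv_cst c : has_deriv0 (fun _ => c) 0.
Proof. by apply: (deriv_ext _ (deriv_lin c 0)) => t; rewrite mulr0 addr0. Qed.

Lemma deriv_add f g a b : has_deriv0 f a -> has_deriv0 g b ->
  has_deriv0 (fun t => f t + g t) (a + b).
Proof.
move=> Hf Hg; apply: (@lim0_ext _ _ _ 1 ltr01); last exact: lim0_add Hf Hg.
by move=> t _ /=; rewrite -mulrDl; congr (_ * _); ring.
Qed.

Lemma deriv_cont f a : has_deriv0 f a -> lim0 f (f 0).
Proof.
move=> Hf.
have H : lim0 (fun t => f 0 + t * ((f t - f 0) / t)) (f 0 + 0 * a).
  exact: lim0_add (lim0_cst _) (lim0_mul lim0_id Hf).
rewrite mul0r addr0 in H; apply: (lim0_ext ltr01 _ H) => t /andP[t0 _].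
have tn : t != 0 by rewrite -normr_gt0.
by rewrite mulrC mulfVK // addrC subrK.
Qed.

Lemma deriv_mul f g a b : has_deriv0 f a -> has_deriv0 g b ->
  has_deriv0 (fun t => f t * g t) (a * g 0 + f 0 * b).
Proof.
move=> Hf Hg.
have H : lim0 (fun t => (f t - f 0) / t * g t + f 0 * ((g t - g 0) / t))
              (a * g 0 + f 0 * b).
  exact: lim0_add (lim0_mul Hf (deriv_cont Hg)) (lim0_mul (lim0_cst _) Hg).
apply: (lim0_ext ltr01 _ H) => t /andP[t0 _].
have tn : t != 0 by rewrite -normr_gt0.
by field.
Qed.

Lemma deriv_sum (I : Type) (s : seq I) (F : I -> R -> R) (dF : I -> R) :
  (forall k, has_deriv0 (F k) (dF k)) ->
  has_deriv0 (fun t => \sum_(k <- s) F k t) (\sum_(k <- s) dF k).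
Proof.
move=> HF; elim: s => [|x s IH].
  by rewrite big_nil; apply: (deriv_ext _ (deriv_cst 0)) => t; rewrite big_nil.
rewrite big_cons; apply: (deriv_ext _ (deriv_add (HF x) IH)) => t.
by rewrite big_cons.
Qed.

Lemma deriv_unique f g d1 d2 r : 0 < r -> (forall t, `|t| < r -> f t = g t) ->
  has_deriv0 f d1 -> has_deriv0 g d2 -> d1 = d2.
Proof.
move=> r0 E Hf Hg; apply: (lim0_unique _ Hg).
apply: (lim0_ext r0 _ Hf) => t /andP[_ tr].
by rewrite !E // normr0.
Qed.

Lemma deriv_locally_cst f c d r : 0 < r -> (forall t, `|t| < r -> f t = c) ->
  has_deriv0 f d -> d = 0.
Proof. by move=> r0 E Hf; apply: (deriv_unique r0 E Hf (deriv_cst c)). Qed.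

Lemma mx_deriv_mul m p q (A : R -> 'M[R]_(m, p)) (B : R -> 'M[R]_(p, q)) A' B' :
  mx_deriv0 A A' -> mx_deriv0 B B' ->
  mx_deriv0 (fun t => A t *m B t) (A' *m B 0 + A 0 *m B').
Proof.
move=> HA HB i j; rewrite !mxE -big_split /=.
apply: (deriv_ext _ (deriv_sum _ (fun k => deriv_mul (HA i k) (HB k j)))) => t.
by rewrite mxE.
Qed.

Lemma mx_deriv_tr m p (A : R -> 'M[R]_(m, p)) A' :
  mx_deriv0 A A' -> mx_deriv0 (fun t => (A t)^T) A'^T.
Proof.
by move=> HA i j; rewrite mxE; apply: (deriv_ext _ (HA j i)) => t; rewrite mxE.
Qed.

End Limits.

Section Triangular.
Variables (F : nzRingType) (n : nat).
Implicit Types (A B D L : 'M[F]_n).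

(* A vanishes below its s-th superdiagonal: s = 0 is upper triangular,
   s = 1 strictly upper triangular. *)
Definition supdiag (s : nat) A := forall i k : 'I_n, (k < i + s)%N -> A i k = 0.

Definition isdiag D := forall i j : 'I_n, i != j -> D i j = 0.

Definition strictly_lower L := forall i k : 'I_n, (i <= k)%N -> L i k = 0.

Lemma supdiag_mul s1 s2 A B : supdiag s1 A -> supdiag s2 B -> supdiag (s1 + s2) (A *m B).
Proof.
move=> HA HB i j ji; rewrite mxE big1 // => k _.
case: (ltnP k (i + s1)) => ks; first by rewrite HA ?mul0r.
by rewrite HB ?mulr0 // (leq_trans ji) // addnA leq_add2r.
Qed.

Lemma supdiag_mul_diag A B : supdiag 0 A -> supdiag 0 B ->
  forall i, (A *m B) i i = A i i * B i i.
Proof.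
move=> HA HB i; rewrite mxE (bigD1 i) //= big1 ?addr0 // => k ki.
case: (ltngtP k i) => [kltI|iltk|/val_inj kei]; last by rewrite kei eqxx in ki.
- by rewrite HA ?mul0r // addn0.
- by rewrite HB ?mulr0 // addn0.
Qed.

Lemma supdiag_diag D : isdiag D -> supdiag 0 D.
Proof. by move=> HD i k; rewrite addn0 => ki; apply: HD; rewrite neq_ltn ki orbT. Qed.

Lemma supdiag_tr_unit_lower L : unit_lower L -> supdiag 0 L^T.
Proof. by move=> [Lu _] i k; rewrite addn0 mxE => ki; apply: Lu. Qed.

Lemma supdiag_tr_strictly_lower L : strictly_lower L -> supdiag 1 L^T.
Proof. by move=> HL i k; rewrite addn1 ltnS mxE => ki; apply: HL. Qed.

Lemma isdiag_tr D : isdiag D -> D^T = D.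
Proof.
move=> HD; apply/matrixP => a b; rewrite mxE.
by case: (eqVneq a b) => [->|ab] //; rewrite !HD // eq_sym.
Qed.

Lemma mulmx_isdiag_l m D (P : 'M[F]_(n, m)) : isdiag D ->
  forall i k, (D *m P) i k = D i i * P i k.
Proof.
move=> HD i k; rewrite mxE (bigD1 i) //= big1 ?addr0 // => z zi.
by rewrite HD ?mul0r // eq_sym.
Qed.

Lemma mulmx_isdiag_r m D (P : 'M[F]_(m, n)) : isdiag D ->
  forall i k, (P *m D) i k = P i k * D k k.
Proof.
move=> HD i k; rewrite mxE (bigD1 k) //= big1 ?addr0 // => z zk.
by rewrite HD ?mulr0.
Qed.

Lemma ord_ltn_ind (P : 'I_n -> Prop) :
  (forall j : 'I_n, (forall k : 'I_n, (k < j)%N -> P k) -> P j) -> forall j, P j.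
Proof.
move=> H; suff S m (j : 'I_n) : (j < m)%N -> P j by move=> j; apply: (S j.+1).
elim: m j => [//|m IH] j jm; apply: H => k kj; apply: IH.
exact: leq_trans kj _.
Qed.

End Triangular.

(* A left inverse of an upper triangular matrix with invertible diagonal
   is upper triangular (column-by-column forward substitution). *)
Lemma supdiag_left_inverse (F : idomainType) n (U W : 'M[F]_n) :
  supdiag 0 U -> (forall i, U i i != 0) -> W *m U = 1%:M -> supdiag 0 W.
Proof.
move=> HU U0 WU i j; rewrite addn0; elim/ord_ltn_ind: j i => j IH i ji.
have : (W *m U) i j = 0.
  by rewrite WU mxE; case: eqP => // eij; rewrite eij ltnn in ji.
rewrite mxE (bigD1 j) //= big1 ?addr0 => [/eqP|k kj].
  by rewrite mulf_eq0 (negbTE (U0 j)) orbF => /eqP.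
case: (ltngtP k j) => [kltj|jltk|/val_inj kej]; last by rewrite kej eqxx in kj.
- by rewrite IH ?mul0r // (ltn_trans kltj).
- by rewrite HU ?mulr0 // addn0.
Qed.

Section LDLDerivative.
Variables (F : fieldType) (n : nat) (L D L' D' : 'M[F]_n).
Hypotheses (HL : unit_lower L) (HD : isdiag D) (HD0 : forall i, D i i != 0).
Hypotheses (HL' : strictly_lower L') (HD' : isdiag D').

(* X = LDL^T, its first-order variation Y, M = X^-1, N = M Y M (minus the
   derivative of the inverse) and the auxiliary W = M L. *)
Local Notation X := (L *m D *m L^T).
Local Notation Y := ((L' *m D + L *m D') *m L^T + L *m D *m L'^T).
Local Notation M := (invmx X).
Local Notation N := (M *m Y *m M).
Local Notation W := (M *m L).

Lemma ldl_unitmx : X \in unitmx.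
Proof.
have [Lu L1] := HL.
have detL : \det L = 1.
  rewrite det_trig; last by apply/is_trig_mxP => i j; apply: Lu.
  by rewrite big1 // => i _; rewrite L1.
rewrite unitmxE !det_mulmx det_tr detL mul1r mulr1 unitfE det_trig.
  by apply/prodf_neq0 => i _.
by apply/is_trig_mxP => i j ij; apply: HD; rewrite neq_ltn ij.
Qed.

Lemma ldl_inv_tr : M^T = M.
Proof. by rewrite trmx_inv !trmx_mul trmxK (isdiag_tr HD) mulmxA. Qed.

Lemma ldl_W_inverse : W *m (D *m L^T) = 1%:M.
Proof. by rewrite -!mulmxA [L *m _]mulmxA mulVmx ?ldl_unitmx. Qed.

Lemma ldl_W_inverse_l : D *m (L^T *m W) = 1%:M.
Proof. by rewrite mulmxA; apply: mulmx1C ldl_W_inverse. Qed.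

Lemma ldl_W_upper : supdiag 0 W.
Proof.
apply: (supdiag_left_inverse _ _ ldl_W_inverse).
  exact: (supdiag_mul (supdiag_diag HD) (supdiag_tr_unit_lower HL)).
move=> i; rewrite (mulmx_isdiag_l _ HD) mxE HL.2 mulr1; exact: HD0.
Qed.

Lemma ldl_LtW_upper : supdiag 0 (L^T *m W).
Proof. exact: (supdiag_mul (supdiag_tr_unit_lower HL) ldl_W_upper). Qed.

Lemma ldl_LtW_diag i : (L^T *m W) i i = (D i i)^-1.
Proof.
have := congr1 (fun A : 'M[F]_n => A i i) ldl_W_inverse_l.
rewrite /= (mulmx_isdiag_l _ HD) [1%:M _ _]mxE eqxx mulr1n => E.
by rewrite -[LHS]mul1r -(mulVf (HD0 i)) -mulrA E mulr1.
Qed.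

Lemma ldl_N_mulL :
  N *m L = M *m L' + W *m D' *m (L^T *m W) + W *m D *m L'^T *m W.
Proof.
have DW : D *m L^T *m W = 1%:M by rewrite -mulmxA ldl_W_inverse_l.
rewrite -mulmxA !mulmxDl !mulmxDr !mulmxDl.
congr (_ + _ + _).
- by rewrite -[RHS]mulmx1 -DW !mulmxA.
- by rewrite !mulmxA.
- by rewrite !mulmxA.
Qed.

Lemma ldl_inverse_derivative_lower (i j : 'I_n) : (j < i)%N -> (N *m L) i j = (M *m L') i j.
Proof.
move=> ji; rewrite ldl_N_mulL; do 2 rewrite [in LHS]mxE.
have z1 : (W *m D' *m (L^T *m W)) i j = 0.
  apply: (supdiag_mul (supdiag_mul ldl_W_upper (supdiag_diag HD')) ldl_LtW_upper).
  by rewrite !addn0.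
have z2 : (W *m D *m L'^T *m W) i j = 0.
  apply: (supdiag_mul (supdiag_mul (supdiag_mul ldl_W_upper (supdiag_diag HD))
            (supdiag_tr_strictly_lower HL')) ldl_W_upper); lia.
by rewrite z1 z2 !addr0.
Qed.

Lemma ldl_inverse_derivative_diag j : (L^T *m N *m L) j j = D' j j / D j j ^+ 2.
Proof.
have LtM : L^T *m M = W^T by rewrite trmx_mul ldl_inv_tr.
have -> : L^T *m N *m L = W^T *m L' + L^T *m W *m D' *m (L^T *m W)
                          + L^T *m W *m D *m L'^T *m W.
  by rewrite -LtM -mulmxA ldl_N_mulL !mulmxDr !mulmxA.
do 2 rewrite [in LHS]mxE.
have z1 : (W^T *m L') j j = 0.
  rewrite -[W^T *m L']trmxK trmx_mul trmxK mxE.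
  by apply: (supdiag_mul (supdiag_tr_strictly_lower HL') ldl_W_upper); lia.
have z2 : (L^T *m W *m D *m L'^T *m W) j j = 0.
  by apply: (supdiag_mul (supdiag_mul (supdiag_mul ldl_LtW_upper (supdiag_diag HD))
              (supdiag_tr_strictly_lower HL')) ldl_W_upper); lia.
rewrite z1 z2 add0r addr0.
have U := supdiag_mul ldl_LtW_upper (supdiag_diag HD').
rewrite (supdiag_mul_diag U ldl_LtW_upper).
rewrite (supdiag_mul_diag ldl_LtW_upper (supdiag_diag HD')) ldl_LtW_diag.
by rewrite mulrC mulrA -invfM -expr2 mulrC.
Qed.

End LDLDerivative.

Section Pattern.
Variables (n : nat) (V : {set 'I_n * 'I_n}).

Definition lower_in_pattern (R : nzRingType) (A : 'M[R]_n) :=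
  forall i k : 'I_n, (k < i)%N -> (i, k) \notin V -> A i k = 0.

Definition col_supp (R : nzRingType) (j : 'I_n) (A : 'M[R]_n) :=
  forall z : 'I_n, z != j -> z \notin Iset V j -> A z j = 0.

Lemma ldlt_entry (R : nzRingType) (L D : 'M[R]_n) i j : isdiag D ->
  (L *m D *m L^T) i j = \sum_k L i k * D k k * L j k.
Proof.
by move=> HD; rewrite mxE; apply: eq_bigr => k _; rewrite mulmx_isdiag_r // mxE.
Qed.

Lemma no_fill (F : idomainType) (L D : 'M[F]_n) :
  filled V -> unit_lower L -> isdiag D -> (forall i, D i i != 0) ->
  (forall i j, ~~ inpat V i j -> (L *m D *m L^T) i j = 0) ->
  lower_in_pattern L.
Proof.
move=> Vf [Lu L1] HD D0 A0 i j; elim/ord_ltn_ind: j i => j IH i ji ijV.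
have := A0 i j; rewrite /inpat ltnW // ijV => /(_ isT).
rewrite ldlt_entry // (bigD1 j) //= L1 mulr1 big1 ?addr0 => [/eqP|k kj].
  by rewrite mulf_eq0 (negbTE (D0 j)) orbF => /eqP.
case: (ltngtP k j) => [kltj|jltk|/val_inj kej]; last by rewrite kej eqxx in kj.
- case ikV : ((i, k) \in V); last first.
    by rewrite (IH k kltj i) ?ikV ?(ltn_trans kltj) // !mul0r.
  case jkV : ((j, k) \in V); last by rewrite (IH k kltj j) ?jkV // mulr0.
  by have := Vf i j k ji kltj ikV jkV; rewrite (negbTE ijV).
- by rewrite (Lu j k jltk) mulr0.
Qed.

Lemma col_supp_lower (R : nzRingType) (A : 'M[R]_n) j :
  (forall i k : 'I_n, (i < k)%N -> A i k = 0) -> lower_in_pattern A ->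
  col_supp j A.
Proof.
move=> Aup Alow z zj zI.
case: (ltngtP z j) => [zlt|jz|/val_inj e]; last by rewrite e eqxx in zj.
- exact: Aup.
- by apply: Alow => //; move: zI; rewrite inE jz.
Qed.

Lemma col_supp_expand (R : nzRingType) m (P : 'M[R]_(m, n)) (B : 'M[R]_n) j a :
  col_supp j B ->
  (P *m B) a j = P a j * B j j +
     \sum_(b < #|Iset V j|) P a (Iidx V j b) * B (Iidx V j b) j.
Proof.
move=> HB; rewrite mxE (bigID (fun z => z \in Iset V j)) /= addrC.
have jI : j \notin Iset V j by rewrite inE ltnn.
rewrite (bigD1 j) //= big1 ?addr0; last first.
  by move=> z /andP[zI zj]; rewrite HB ?mulr0.
by congr (_ + _); apply: big_enum_val.
Qed.

Lemma subIj_mulmx (R : comNzRingType) (A B : 'M[R]_n) j : col_supp j B ->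
  subIj V j (A *m B) = B j j *: subIj V j A + subII V j A *m subIj V j B.
Proof.
move=> HB; apply/matrixP => a z; rewrite [LHS]mxE (col_supp_expand _ _ HB) !mxE mulrC.
by congr (_ + _); apply: eq_bigr => b _; rewrite !mxE.
Qed.

Lemma tr_mulmx_diag (R : comNzRingType) (B C : 'M[R]_n) j : col_supp j B ->
  ((B^T *m C) j j)%:M = (B j j * C j j)%:M + (subIj V j B)^T *m subIj V j C.
Proof.
move=> HB; rewrite -[B^T *m C]trmxK trmx_mul trmxK mxE (col_supp_expand _ _ HB).
apply/matrixP => a c; rewrite !ord1 !mxE /= !mulr1n mulrC.
by congr (_ + _); apply: eq_bigr => b _; rewrite !mxE mulrC.
Qed.

Lemma Iset_clique (j a b : 'I_n) : sparsity_pattern V -> filled V ->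
  (a == j) || (a \in Iset V j) -> (b == j) || (b \in Iset V j) -> inpat V a b.
Proof.
move=> [_ Vd] Vf; rewrite /inpat !inE.
case: (eqVneq a b) => [->|ab]; first by rewrite leqnn Vd.
case/orP=> [/eqP ea|/andP[ja ajV]]; case/orP=> [/eqP eb|/andP[jb bjV]].
- by subst; rewrite eqxx in ab.
- by subst; rewrite leqNgt jb.
- by subst; rewrite ltnW.
- case: (ltngtP a b) => [ab'|ba|/val_inj e]; last by rewrite e eqxx in ab.
  + exact: (Vf b a j ab' ja bjV ajV).
  + exact: (Vf a b j ba jb ajV bjV).
Qed.

Lemma projV_restrict (R : nzRingType) (A : 'M[R]_n) (j : 'I_n) :
  sparsity_pattern V -> filled V ->
  [/\ projV V A j j = A j j, subIj V j (projV V A) = subIj V j A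
    & subII V j (projV V A) = subII V j A].
Proof.
move=> Vs Vf; have inI b : (Iidx V j b == j) || (Iidx V j b \in Iset V j).
  by rewrite enum_valP orbT.
have PJ := Iset_clique (j := j) Vs Vf.
split; first by rewrite mxE PJ ?eqxx.
- by apply/matrixP => a b; rewrite !mxE PJ ?eqxx.
- by apply/matrixP => a b; rewrite !mxE PJ.
Qed.

End Pattern.

Lemma block_congruence (R : comNzRingType) k (a : R) (l t : 'cV[R]_k) (Q : 'M[R]_k) :
  Q^T = Q ->
  block_mx (1%:M : 'M_1) l^T 0 1%:M *m block_mx a%:M t^T t Q
    *m block_mx (1%:M : 'M_1) 0 l 1%:M
  = block_mx (a%:M + l^T *m t + l^T *m (t + Q *m l)) (t + Q *m l)^T
             (t + Q *m l) Q.
Proof.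
move=> QT; have tr11 (A : 'M[R]_1) : A^T = A by rewrite [A]mx11_scalar tr_scalar_mx.
have tl : t^T *m l = l^T *m t by rewrite -[l^T *m t]tr11 trmx_mul trmxK.
have tQl : (t + Q *m l)^T = t^T + l^T *m Q by rewrite linearD /= trmx_mul QT.
rewrite !mulmx_block !mul1mx !mulmx1 !mul0mx !mulmx0 ?add0r ?addr0 tQl.
by rewrite mulmxDl mulmxDr tl mulmxA.
Qed.

Lemma restricted_block_identity (R : comNzRingType) n (V : {set 'I_n * 'I_n})
    (j : 'I_n) (L L' M N : 'M[R]_n) (c : R) :
  sparsity_pattern V -> filled V -> N^T = N ->
  col_supp V j L -> col_supp V j L' -> L j j = 1 -> L' j j = 0 ->
  (forall i : 'I_n, (j < i)%N -> (N *m L) i j = (M *m L') i j) ->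
  (L^T *m N *m L) j j = c ->
  let T := projV V N in let S := projV V M in
  block_mx (1%:M : 'M_1) (subIj V j L)^T 0 1%:M
    *m block_mx (T j j)%:M (subIj V j T)^T (subIj V j T) (subII V j T)
    *m block_mx (1%:M : 'M_1) 0 (subIj V j L) 1%:M
  = block_mx c%:M (subII V j S *m subIj V j L')^T
             (subII V j S *m subIj V j L') (subII V j T).
Proof.
move=> Vs Vf NT HL HL' L1 L'0 Nlow Ndiag T S.
have [-> -> ->] := projV_restrict N j Vs Vf.
have [_ _ ->] := projV_restrict M j Vs Vf.
have QT : (subII V j N)^T = subII V j N.
  by apply/matrixP => a b; rewrite !mxE -[in RHS]NT mxE.
have NLcol : subIj V j (N *m L) = subII V j M *m subIj V j L'.
  rewrite -[RHS]add0r -(scale0r (subIj V j M)) -L'0 -(subIj_mulmx M HL').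
  apply/matrixP => a b.
  have entry (A : 'M[R]_n) : subIj V j A a b = A (Iidx V j a) j by rewrite mxE.
  rewrite !entry; apply: Nlow.
  by have := enum_valP a; rewrite inE => /andP[].
have NLjj : (N *m L) j j = (L^T *m N) j j.
  by rewrite -[L in LHS]trmxK -[in LHS]NT -trmx_mul mxE.
have NLsplit : subIj V j N + subII V j N *m subIj V j L = subIj V j (N *m L).
  by rewrite (subIj_mulmx N HL) L1 scale1r.
rewrite block_congruence // NLsplit NLcol; congr block_mx.
rewrite -NLcol -Ndiag -mulmxA (tr_mulmx_diag _ HL) L1 mul1r NLjj.
by rewrite (tr_mulmx_diag _ HL) L1 mul1r.
Qed.

Section LDLPath.
Variables (R : realFieldType) (n : nat) (X Y : 'M[R]_n).
Variables (Lf Df : R -> 'M[R]_n) (L' D' : 'M[R]_n) (eps : R).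

Definition ldl_path := forall t : R, `|t| < eps ->
  [/\ unit_lower (Lf t), pos_diag (Df t) & X + t *: Y = Lf t *m Df t *m (Lf t)^T].

Hypotheses (eps0 : 0 < eps) (Hpath : ldl_path).
Hypotheses (HLd : mx_deriv0 Lf L') (HDd : mx_deriv0 Df D').

(* Differentiating the factorization at t = 0; the shape constraints
   (unit diagonal, zeros) are constant along the path. *)
Lemma ldl_path_derivative :
  [/\ Y = (L' *m Df 0 + Lf 0 *m D') *m (Lf 0)^T + Lf 0 *m Df 0 *m L'^T,
      strictly_lower L' & isdiag D'].
Proof.
split.
- have Hd := mx_deriv_mul (mx_deriv_mul HLd HDd) (mx_deriv_tr HLd).
  apply/matrixP => a b.
  apply: (deriv_unique eps0 _ (deriv_lin (X a b) (Y a b)) (Hd a b)) => t tl /=.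
  by have [_ _ <-] := Hpath tl; rewrite !mxE.
- move=> i k; rewrite leq_eqVlt => /orP[/eqP/val_inj->|ik].
    by apply: (deriv_locally_cst eps0 _ (HLd k k)) => t /Hpath [[_ ->] _ _].
  by apply: (deriv_locally_cst eps0 _ (HLd i k)) => t /Hpath [[-> //] _ _].
- move=> a b ab; apply: (deriv_locally_cst eps0 _ (HDd a b)) => t.
  by case/Hpath => _ [-> //] _.
Qed.

Lemma ldl_path_no_fill (V : {set 'I_n * 'I_n}) :
  filled V -> (forall i j, ~~ inpat V i j -> X i j = 0) ->
  (forall i j, ~~ inpat V i j -> Y i j = 0) ->
  lower_in_pattern V (Lf 0) /\ lower_in_pattern V L'.
Proof.
move=> Vf X0 Y0.
have Lt_pat t : `|t| < eps -> lower_in_pattern V (Lf t).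
  case/Hpath=> HLt [HDt Dpos] XE; apply: (no_fill Vf HLt HDt).
    by move=> i; rewrite gt_eqF.
  by move=> a b ab; rewrite -XE !mxE X0 // Y0 // mulr0 addr0.
split; first by apply: Lt_pat; rewrite normr0.
move=> i k ki ikV; apply: (deriv_locally_cst eps0 _ (HLd i k)) => t tl.
exact: Lt_pat.
Qed.

End LDLPath.

Theorem mainTheorem6 (R : realFieldType) (n : nat) (V : {set 'I_n * 'I_n})
  (X Y : 'M[R]_n) (Lf Df : R -> 'M[R]_n) (L' D' : 'M[R]_n) (eps : R) :
  sparsity_pattern V -> filled V ->
  in_SV V X -> posdef X -> in_SV V Y ->
  0 < eps ->
  (forall t : R, `|t| < eps ->
     [/\ unit_lower (Lf t), pos_diag (Df t) &
         X + t *: Y = Lf t *m Df t *m (Lf t)^T]) ->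
  mx_deriv0 Lf L' -> mx_deriv0 Df D' ->
  let L := Lf 0 in let D := Df 0 in
  let S := projV V (invmx X) in
  let T := projV V (invmx X *m Y *m invmx X) in
  forall j : 'I_n,
    block_mx (1%:M : 'M_1) (subIj V j L)^T 0 1%:M
    *m block_mx (T j j)%:M (subIj V j T)^T (subIj V j T) (subII V j T)
    *m block_mx (1%:M : 'M_1) 0 (subIj V j L) 1%:M
    = block_mx (D' j j / (D j j) ^+ 2)%:M (subII V j S *m subIj V j L')^T
               (subII V j S *m subIj V j L') (subII V j T).
Proof.
move=> Vs Vf [XT X0] _ [YT Y0] eps0 Hpath HLd HDd L D S T j.
have t0 : `|0 : R| < eps by rewrite normr0.
have [HL [HD Dpos] XE] := Hpath 0 t0.
rewrite scale0r addr0 in XE.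
have [YE HL' HD'] := ldl_path_derivative eps0 Hpath HLd HDd.
have [Lpat L'pat] := ldl_path_no_fill eps0 Hpath HLd Vf X0 Y0.
have NT : (invmx X *m Y *m invmx X)^T = invmx X *m Y *m invmx X.
  by rewrite !trmx_mul trmx_inv XT YT mulmxA.
have D0 i : Df 0 i i != 0 by rewrite gt_eqF.
rewrite /L /D /S /T; rewrite XE YE in NT *.
apply: restricted_block_identity => //.
- exact: col_supp_lower HL.1 Lpat.
- by apply: col_supp_lower L'pat => i k ik; apply: HL'; rewrite ltnW.
- exact: HL.2.
- exact: HL'.
- by move=> i; apply: ldl_inverse_derivative_lower.
- exact: ldl_inverse_derivative_diag.
Qed.
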